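(* Let $T$ be a tree and $(I,R)$ a crosscut pair of $T$. Then at least one of the following holds: (i) there exists a vertex $v\in I$ such that all but one vertex of $N_T(v)$ are leaves of $T$; (ii) there exists an edge $e\in R$ which is a pendant edge of $T$. In particular, if $|I|$ is maximum among all crosscut pairs $(I,R)$ of $T$, then (i) holds.
   Context: For a graph $F$, $|F|$ is its number of edges and $F-I$ the subgraph induced on $V(F)\setminus I$. The crosscut number is $\sigma(F)=\min\{|I|+|F-I| : I\text{ independent in }F\}$. A crosscut pair of a tree $T$ is a pair $(I,R)$ with $I\subseteq V(T)$ independent in $T$, $R=T-I$ (the edge set of the subgraph induced on $V(T)\setminus I$), and $|I|+|R|=\sigma(T)$. A leaf is a vertex of degree $1$; an edge $uv$ is pendant if $\min\{d_T(u),d_T(v)\}=1$. *)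

(* A (simple) graph is a symmetric irreflexive relation
   e : rel T on a finType T; edges are the 2-element sets {x,y} with e x y. *)
From mathcomp Require Import all_boot.
Set Implicit Arguments. Unset Strict Implicit. Unset Printing Implicit Defensive.

Section Graphs.
Variables (T : finType) (e : rel T).

Definition simple_graph := symmetric e /\ irreflexive e.

(* a cycle: a closed e-path through k >= 3 pairwise distinct vertices *)
Definition has_cycle :=
  exists (x : T) (p : seq T), [/\ 2 <= size p, path e x p, uniq (x :: p) & e (last x p) x].

Definition connected_graph := forall x y : T, connect e x y.

Definition is_tree := [/\ simple_graph, connected_graph & ~ has_cycle].

Definition induced_edges (S : {set T}) : {set {set T}} :=
  [set [set x; y] | x in S, y in S & e x y].

Definition edges : {set {set T}} := induced_edges setT.

Definition independent (I : {set T}) := [forall x in I, forall y in I, ~~ e x y].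

Definition nbhd (v : T) : {set T} := [set u | e v u].
Definition deg (v : T) := #|nbhd v|.
Definition leaf (v : T) := deg v == 1.

Definition crosscut_val (I : {set T}) := #|I| + #|induced_edges (~: I)|.

(* sigma(F) = min over independent I of |I| + |F - I| (set0 is independent) *)
Definition crosscut_number : nat :=
  \big[minn/crosscut_val set0]_(I : {set T} | independent I) crosscut_val I.

Definition crosscut_pair (I : {set T}) (R : {set {set T}}) :=
  [/\ independent I, R = induced_edges (~: I) & #|I| + #|R| = crosscut_number].

(* (i): some v in I all but (at most) one of whose neighbours are leaves *)
Definition cond_i (I : {set T}) :=
  exists2 v, v \in I & exists u, forall w, w \in nbhd v -> w != u -> leaf w.

Definition cond_ii (R : {set {set T}}) :=
  exists x y, [/\ e x y, [set x; y] \in R & leaf x || leaf y].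

End Graphs.

(* Take a longest path x0 x1 x2 ... in the tree.  Its end x0 is a leaf, and so
   is every neighbour w <> x2 of x1: w is off the path (a tree has no chords),
   so w x1 x2 ... is another longest path.  Hence if neither x0 nor x1 is in I,
   the pendant edge x0x1 lies in R.  Conversely, if R contains a pendant edge xy
   with x a leaf, then I + x is still independent and loses the edge xy from R,
   so it is a crosscut pair with a larger independent set. *)

From mathcomp Require Import all_boot all_order.
From Stdlib Require Import Classical.
Import Order.TTheory.

Set Implicit Arguments. Unset Strict Implicit. Unset Printing Implicit Defensive.

Lemma exists_max_measure (A : Type) (P : A -> Prop) (f : A -> nat) (N : nat) a :
  (forall b, P b -> f b <= N) -> P a ->
  exists2 b, P b & forall c, P c -> f c <= f b.
Proof.
move=> bounded; move: {2}(N - f a) (leqnn (N - f a)) => k.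
elim: k a => [|k IHk] a gap Pa.
  rewrite leqn0 subn_eq0 in gap.
  by exists a => // c /bounded fcN; apply: leq_trans fcN gap.
have [[c [Pc ac]]|amax] := classic (exists c, P c /\ f a < f c).
  apply: (IHk c) => //; rewrite -ltnS; apply: leq_trans gap.
  by rewrite ltn_sub2l // (leq_trans ac (bounded c Pc)).
exists a => // c Pc; rewrite leqNgt; apply/negP => ac; apply: amax; by exists c.
Qed.

Section SimplePaths.
Variables (T : finType) (e : rel T).

Definition upath x p := path e x p && uniq (x :: p).

Definition longest_upath x p :=
  upath x p /\ forall y q, upath y q -> size q <= size p.

Lemma upath_cons y x p : upath y (x :: p) = [&& e y x, y \notin x :: p & upath x p].
Proof. by rewrite /upath /= -!andbA; congr (_ && _); rewrite andbCA. Qed.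

Lemma upath_size x p : upath x p -> size p < #|T|.
Proof. by case/andP=> _ /card_uniqP; rewrite /= => <-; apply: max_card. Qed.

Lemma exists_longest_upath x p :
  upath x p -> exists y q, longest_upath y q /\ size p <= size q.
Proof.
move=> xp.
have [[y q] yq qmax] := @exists_max_measure _ (fun a => upath a.1 a.2)
  (fun a => size (a.2)) #|T| (x, p) (fun b bP => ltnW (upath_size bP)) xp.
exists y, q; split; last exact: qmax (x, p) xp.
by split=> // z r zr; apply: qmax (z, r) zr.
Qed.

Hypotheses (esym : symmetric e) (eirr : irreflexive e) (acyclic : ~ has_cycle e).

Lemma upath_adj_start x p y : upath x p -> y \in p -> e y x -> y = head x p.
Proof.
case/andP=> xp unxp /splitPr yp eyx; case: yp xp unxp => [[|z p1] p2] //.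
rewrite -cat_rcons -!cat_cons cat_path cat_uniq => /andP[xzp1y _] /and3P[unxzp1y _ _].
exfalso; apply: acyclic; exists x, (rcons (z :: p1) y).
by rewrite size_rcons last_rcons.
Qed.

Lemma longest_upath_start_nbhd x y p : longest_upath x (y :: p) -> nbhd e x = [set y].
Proof.
case=> xp xpmax; apply/setP => z; rewrite !inE; apply/idP/eqP => [exz|->]; last first.
  by move: xp; rewrite upath_cons => /andP[].
have [|zxp] := boolP (z \in x :: y :: p).
  rewrite in_cons => /predU1P[zx|zyp]; first by move: exz; rewrite zx eirr.
  by apply: upath_adj_start xp zyp _; rewrite esym.
have /xpmax : upath z (x :: y :: p) by rewrite upath_cons esym exz zxp.
by rewrite /= ltnn.
Qed.

Lemma exists_support_vertex : connected_graph e -> 1 < #|T| ->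
  exists x0 x1 u,
    nbhd e x0 = [set x1] /\ forall w, w \in nbhd e x1 -> w != u -> leaf e w.
Proof.
move=> conn /card_gt1P[a [b [_ _ ab]]].
have [c eac] : exists c, e a c.
  case/connectP: (conn a b) => [[|c p] /= acp ba]; first by rewrite ba eqxx in ab.
  by exists c; case/andP: acp.
have upath_ac : upath a [:: c].
  by rewrite /upath /= eac inE /= andbT; apply: contraTneq eac => ->; rewrite eirr.
have [x0 [[|x1 p] [lp]]] := exists_longest_upath upath_ac; first by [].
have nx0 := longest_upath_start_nbhd lp.
exists x0, x1, (head x1 p); split=> // w; rewrite inE => ex1w wu.
(* [w :: x1 :: p] is as long as [x0 :: x1 :: p], so its start [w] is a leaf too. *)
suff /longest_upath_start_nbhd nw : longest_upath w (x1 :: p).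
  by rewrite /leaf /deg nw cards1.
case: lp => + pmax; rewrite upath_cons => /and3P[_ _ x1p]; split=> //.
rewrite upath_cons esym ex1w x1p in_cons negb_or andbT /=.
apply/andP; split; first by apply: contraTneq ex1w => ->; rewrite eirr.
by apply: contra wu => wp; apply/eqP; apply: upath_adj_start x1p wp _; rewrite esym.
Qed.
End SimplePaths.

Section Crosscuts.
Variables (T : finType) (e : rel T).
Implicit Types (S I J : {set T}) (R : {set {set T}}).

Lemma mem_induced_edges S x y :
  x \in S -> y \in S -> e x y -> [set x; y] \in induced_edges e S.
Proof. by move=> xS yS exy; apply/imset2P; exists x y; rewrite ?inE ?yS. Qed.

Lemma induced_edge_ends S x y :
  [set x; y] \in induced_edges e S -> (x \in S) && (y \in S).
Proof.
case/imset2P=> a b aS; rewrite inE => /andP[bS _] xy_ab.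
have: x \in [set a; b] by rewrite -xy_ab set21.
have: y \in [set a; b] by rewrite -xy_ab set22.
by rewrite !inE => /orP[]/eqP-> /orP[]/eqP->; rewrite ?aS ?bS.
Qed.

Lemma induced_edgesS S S' : S \subset S' -> induced_edges e S \subset induced_edges e S'.
Proof.
move=> sSS'; apply/subsetP => xy /imset2P[x y xS]; rewrite inE => /andP[yS exy] ->.
by apply: mem_induced_edges; rewrite ?(subsetP sSS').
Qed.

Lemma leaf_nbhd x y : leaf e x -> e x y -> nbhd e x = [set y].
Proof.
case/cards1P=> z nx exy; have: y \in nbhd e x by rewrite inE.
by rewrite nx inE => /eqP <-.
Qed.

Lemma crosscut_number_le I : independent e I -> crosscut_number e <= crosscut_val e I.
Proof. by move=> indI; apply: (bigmin_le_cond _ (crosscut_val e) indI). Qed.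

Lemma crosscut_pair_le I R J : crosscut_pair e I R -> independent e J ->
  crosscut_val e J <= #|I| + #|R| -> crosscut_pair e J (induced_edges e (~: J)).
Proof.
case=> _ _ IRmin indJ J_le; split=> //; apply/eqP; rewrite eqn_leq.
by rewrite -IRmin J_le IRmin crosscut_number_le.
Qed.

Hypotheses (esym : symmetric e) (eirr : irreflexive e).

Lemma independentU1 I x :
  independent e I -> (forall y, e x y -> y \notin I) -> independent e (x |: I).
Proof.
move=> indI xI; apply/forall_inP => a aI; apply/forall_inP => b bI.
rewrite !inE in aI bI.
case/predU1P: aI => [->|aI]; case/predU1P: bI => [->|bI].
- by rewrite eirr.
- by apply: contraTN bI => /xI.
- by rewrite esym; apply: contraTN aI => /xI.
- exact: (forall_inP (forall_inP indI a aI) b bI).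
Qed.

Lemma crosscut_pairU1_leaf I x y :
  crosscut_pair e I (induced_edges e (~: I)) -> leaf e x -> e x y ->
  [set x; y] \in induced_edges e (~: I) ->
  crosscut_pair e (x |: I) (induced_edges e (~: (x |: I))) /\ #|x |: I| = #|I|.+1.
Proof.
move=> IRpair xleaf exy xyR; have [indI _ _] := IRpair.
have /andP := induced_edge_ends xyR; rewrite !inE => -[xI yI].
have cardxI : #|x |: I| = #|I|.+1 by rewrite cardsU1 xI.
split=> //; apply: crosscut_pair_le IRpair _ _.
  apply: independentU1 => // z exz; have: z \in nbhd e x by rewrite inE.
  by rewrite (leaf_nbhd xleaf exy) inE => /eqP ->.
have lost_xy : induced_edges e (~: (x |: I)) \proper induced_edges e (~: I).
  rewrite properE induced_edgesS ?setCS ?subsetUr //=.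
  apply/subsetPn; exists [set x; y] => //.
  by apply/negP => /induced_edge_ends; rewrite !inE eqxx.
by rewrite /crosscut_val cardxI addSn -addnS leq_add2l proper_card.
Qed.

Lemma cond_ii_not_maximal I R : crosscut_pair e I R -> cond_ii e R ->
  exists2 J, crosscut_pair e J (induced_edges e (~: J)) & #|J| = #|I|.+1.
Proof.
move=> IRpair [x [y [exy + /orP[xleaf|yleaf]]]]; case: (IRpair) => _ defR _.
- rewrite defR in IRpair * => xyR.
  by have [? ?] := crosscut_pairU1_leaf IRpair xleaf exy xyR; exists (x |: I).
- rewrite defR setUC in IRpair * => yxR; rewrite esym in exy.
  by have [? ?] := crosscut_pairU1_leaf IRpair yleaf exy yxR; exists (y |: I).
Qed.
End Crosscuts.

Lemma tree_cond_i_or_cond_ii (T : finType) (e : rel T) J :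
  is_tree e -> 1 < #|T| -> cond_i e J \/ cond_ii e (induced_edges e (~: J)).
Proof.
move=> [[esym eirr] conn acyclic] nT.
have [x0 [x1 [u [nx0 x1_support]]]] := exists_support_vertex esym eirr acyclic conn nT.
have: x1 \in nbhd e x0 by rewrite nx0 set11.
rewrite inE => ex01.
have [x0J|x0J] := boolP (x0 \in J).
  by left; exists x0 => //; exists x1 => w; rewrite nx0 inE => ->.
have [x1J|x1J] := boolP (x1 \in J); first by left; exists x1 => //; exists u.
right; exists x0, x1; split=> //; first by apply: mem_induced_edges; rewrite ?inE.
by rewrite /leaf /deg nx0 cards1.
Qed.

Theorem proposition2p6 (T : finType) (e : rel T) :
  is_tree e -> 1 < #|T| ->
  forall (I : {set T}) (R : {set {set T}}),
    crosscut_pair e I R ->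
    (cond_i e I \/ cond_ii e R) /\
    ((forall (I' : {set T}) (R' : {set {set T}}),
        crosscut_pair e I' R' -> #|I'| <= #|I|) -> cond_i e I).
Proof.
move=> tree nT I R IRpair; have [[esym eirr] _ _] := tree.
have [_ defR _] := IRpair; split; first by rewrite defR; exact: tree_cond_i_or_cond_ii.
move=> Imax; case: (tree_cond_i_or_cond_ii I tree nT) => //; rewrite -defR.
case/(cond_ii_not_maximal esym eirr IRpair) => J Jpair cardJ.
by have := Imax J _ Jpair; rewrite cardJ ltnn.
Qed.
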